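(* Let $n\ge1$ and let $P=a_1+a_2+\dots+a_k$ be a partition of $n$ (an ordered sum of positive integers) with every part $a_i\le 3$. Let $JSMP_n$ be the set of elements of the Jones' monoid $J_n$ for which $P$ is a partition. Then $JSMP_n$ is an idempotent monoid under the operation of $J_n$, i.e. it is a submonoid of $J_n$ in which every element $x$ satisfies $x\cdot x=x$.
   Context: A Kauffman diagram on $2n$ points is a rectangle with $n$ marked points on its upper side and $n$ on its lower side, the $2n$ points being paired by $n$ pairwise non-intersecting strings inside the rectangle, considered up to planar isotopy. The product $AB$ of two diagrams is formed by stacking $A$ on top of $B$ (identifying the lower side of $A$ with the upper side of $B$). The Jones' monoid $J_n$ is the set of Kauffman diagrams on $2n$ points with this concatenation product, where any closed loops arising in a product are simply deleted; its identity is the diagram with $n$ vertical strings. For $j\in J_n$, $P=a_1+\dots+a_k$ is said to be a partition of $j$ if $j$ can be divided by $k-1$ vertical line segments (not crossing any string) into consecutive parts, the $i$-th part containing $a_i$ strings (i.e. $a_i$ upper and $a_i$ lower marked points). *)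

From mathcomp Require Import all_boot.
Set Implicit Arguments. Unset Strict Implicit. Unset Printing Implicit Defensive.

(* Marked points of a Kauffman diagram on 2n points:
   (true, i) = i-th upper point, (false, i) = i-th lower point (i = 0..n-1,
   numbered left to right). *)
Definition kpt (n : nat) : finType := (bool * 'I_n)%type.

(* A (candidate) diagram is given by the pairing map: each point is sent to
   the other endpoint of its string.  A diagram up to planar isotopy is
   exactly determined by this non-crossing perfect matching. *)
Definition kdiag (n : nat) := {ffun kpt n -> kpt n}.

(* Position of a marked point on the boundary of the rectangle, read
   cyclically: upper side left to right, then lower side right to left. *)
Definition kpos (n : nat) (x : kpt n) : nat :=
  if x.1 then val x.2 else (2 * n).-1 - val x.2.

Definition is_kauffman (n : nat) (f : kdiag n) : bool :=
  [forall x, (f (f x) == x) && (f x != x)] &&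
  [forall x, forall y,
     ~~ [&& kpos x < kpos y, kpos y < kpos (f x) & kpos (f x) < kpos (f y)]].

Definition kid (n : nat) : kdiag n := [ffun x : kpt n => (~~ x.1, x.2)].

(* Following a string through the stacked picture A over B.
   inA = true : we are at point p of A, about to follow A's string from p;
   inA = false : same for B.  Middle points (lower side of A = upper side of B)
   are passed through.  fuel bounds the number of steps. *)
Fixpoint kwalk (n : nat) (A B : kdiag n) (fuel : nat) (inA : bool) (p : kpt n)
  : kpt n :=
  match fuel with
  | 0 => p
  | fuel'.+1 =>
    if inA then
      let q := A p in if q.1 then q else kwalk A B fuel' false (true, q.2)
    else
      let q := B p in if ~~ q.1 then q else kwalk A B fuel' true (false, q.2)
  end.

(* Product AB: A stacked on top of B, closed loops deleted.  An upper point of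
   AB is an upper point of A, a lower point of AB is a lower point of B.
   (2n+1 steps always suffice for genuine diagrams.) *)
Definition kmul (n : nat) (A B : kdiag n) : kdiag n :=
  [ffun x : kpt n => kwalk A B (2 * n).+1 x.1 x].

Definition cuts (P : seq nat) : seq nat :=
  [seq sumn (take i P) | i <- iota 1 (size P)].

(* P is a partition of f: vertical lines placed at the cuts cross no string,
   i.e. every string has both endpoints in the same part (the part of a point
   of index i is determined by its position relative to the cuts). *)
Definition has_partition (n : nat) (P : seq nat) (f : kdiag n) : bool :=
  [forall x, all (fun c => (val x.2 < c) == (val (f x).2 < c)) (cuts P)].

Definition jsmp (n : nat) (P : seq nat) (f : kdiag n) : bool :=
  is_kauffman f && has_partition P f.

From mathcomp Require Import all_boot zify.
Set Implicit Arguments. Unset Strict Implicit. Unset Printing Implicit Defensive.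

(* A diagram admitting the partition P is a juxtaposition of diagrams on the
   blocks of P: no string leaves its block, strings of different blocks are
   separated by a vertical line and cannot cross, and the restriction to a
   block of size a, shifted to the left, is a diagram of J_a.  Following a
   string through a product of two such diagrams never leaves the block
   either, so the product is computed block by block.  Hence JSMP_n is the
   direct product of the J_a for the parts a <= 3, and J_1, J_2, J_3 (with
   1, 2 and 5 elements) are checked to be bands by exhaustive computation. *)

Definition point := (bool * nat)%type.

Definition npos (n : nat) (p : point) : nat :=
  if p.1 then p.2 else (2 * n).-1 - p.2.

Definition crossing (n : nat) (F : point -> point) (p q : point) : bool :=
  [&& npos n p < npos n q, npos n q < npos n (F p) & npos n (F p) < npos n (F q)].

Definition kauffman_on (n : nat) (F : point -> point) : Prop :=
  (forall p, p.2 < n -> [/\ (F p).2 < n, F (F p) = p & F p != p]) /\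
  (forall p q, p.2 < n -> q.2 < n -> ~~ crossing n F p q).

Lemma eq_kauffman_on n (F G : point -> point) :
  (forall p, p.2 < n -> F p = G p) -> kauffman_on n F -> kauffman_on n G.
Proof.
move=> FG [invF ncF]; split=> [p lt_p | p q lt_p lt_q].
  have [lt_Fp FFp nFp] := invF p lt_p.
  by rewrite -(FG p) // -(FG (F p)).
by rewrite /crossing -!FG //; apply: ncF.
Qed.

Lemma crossing_separated n (F : point -> point) p q c :
  p.2 < n -> (F p).2 < n -> q.2 < n -> (F q).2 < n ->
  (p.2 < c) = ((F p).2 < c) -> (q.2 < c) = ((F q).2 < c) ->
  (p.2 < c) != (q.2 < c) -> ~~ crossing n F p q.
Proof.
rewrite /crossing /npos; case: (F p) (F q) => [bf i'] [bg k'].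
case: p q => [bp i] [bq k] /=.
case: (ltnP i c); case: (ltnP i' c); case: (ltnP k c); case: (ltnP k' c) => //= *;
  apply/negP => /and3P[]; move: bp bf bq bg => [] [] [] [] /=; lia.
Qed.

Definition shift (s : nat) (p : point) : point := (p.1, s + p.2).

Lemma shift0 p : shift 0 p = p. Proof. by case: p. Qed.

Lemma shift_inj s : injective (shift s).
Proof. by case=> [b i] [b' i'] [-> /eqP]; rewrite eqn_add2l => /eqP ->. Qed.

Lemma npos_shift n s a p q : s + a <= n -> p.2 < a -> q.2 < a ->
  (npos a p < npos a q) = (npos n (shift s p) < npos n (shift s q)).
Proof. by case: p q => [[] i] [[] k]; rewrite /npos /= => *; apply/idP/idP; lia. Qed.

Definition local (s a : nat) (F H : point -> point) : Prop :=
  forall p, p.2 < a -> (H p).2 < a /\ F (shift s p) = shift s (H p).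

Lemma crossing_shift n s a F H p q : s + a <= n -> local s a F H ->
  p.2 < a -> q.2 < a -> crossing a H p q = crossing n F (shift s p) (shift s q).
Proof.
move=> le_n locH lt_p lt_q; rewrite /crossing.
have [lt_Hp ->] := locH p lt_p; have [lt_Hq ->] := locH q lt_q.
by rewrite !(npos_shift le_n).
Qed.

Definition restrict (s : nat) (F : point -> point) (p : point) : point :=
  ((F (shift s p)).1, (F (shift s p)).2 - s).

Lemma local_restrict s a F :
  (forall p, p.2 < a -> s <= (F (shift s p)).2 < s + a) -> local s a F (restrict s F).
Proof.
move=> rangeF p /rangeF; rewrite /restrict /shift /=.
by case: (F (p.1, s + p.2)) => c j /= bounds; split; [lia | congr pair; lia].
Qed.

(* [kwalk] returns its current point when it runs out of fuel, which looks
   like a genuine exit; [walk] tells the two apart. *)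
Fixpoint walk (F G : point -> point) (fuel : nat) (inA : bool) (p : point) :
    option point :=
  if fuel is fuel'.+1 then
    if inA then
      let q := F p in if q.1 then Some q else walk F G fuel' false (true, q.2)
    else
      let q := G p in if ~~ q.1 then Some q else walk F G fuel' true (false, q.2)
  else None.

Lemma walk_fuel F G k m b p q :
  walk F G k b p = Some q -> walk F G (k + m) b p = Some q.
Proof. by elim: k b p => [|k IH] // [] p /=; case: ifP => // _; apply: IH. Qed.

Lemma walk_shift s a (F G F' G' : point -> point) k b p q :
  local s a F F' -> local s a G G' -> p.2 < a ->
  walk F' G' k b p = Some q -> walk F G k b (shift s p) = Some (shift s q).
Proof.
move=> locF locG; elim: k b p => [|k IH] [] p lt_p //=.
  have [+ ->] := locF p lt_p; case: (F' p) => [[] j] lt_j /=; last exact: IH.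
  by case=> <-.
have [+ ->] := locG p lt_p; case: (G' p) => [[] j] lt_j /=; first exact: IH.
by case=> <-.
Qed.

Lemma local0 a (F F' : point -> point) :
  (forall p, p.2 < a -> (F' p).2 < a /\ F p = F' p) -> local 0 a F F'.
Proof. by move=> FF' p; rewrite !shift0; apply: FF'. Qed.

Lemma walk_local0 a (F G F' G' : point -> point) k b p q :
  local 0 a F F' -> local 0 a G G' -> p.2 < a ->
  walk F' G' k b p = Some q -> walk F G k b p = Some q.
Proof. by move=> locF locG lt_p /(walk_shift locF locG lt_p); rewrite !shift0. Qed.

Definition points (n : nat) : seq point :=
  [seq (true, j) | j <- iota 0 n] ++ [seq (false, j) | j <- iota 0 n].

Lemma size_points n : size (points n) = 2 * n.
Proof. by rewrite size_cat !size_map size_iota addnn mul2n. Qed.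

Lemma nth_points n p q :
  p.2 < n -> nth q (points n) (if p.1 then p.2 else n + p.2) = p.
Proof.
case: p => [[] j] /= lt_j; rewrite nth_cat size_map size_iota.
  by rewrite lt_j (nth_map 0) ?size_iota // nth_iota.
by rewrite ltnNge leq_addr /= addKn (nth_map 0) ?size_iota // nth_iota.
Qed.

Lemma mem_points n p : (p \in points n) = (p.2 < n).
Proof.
apply/idP/idP => [|lt_p].
  by rewrite mem_cat => /orP[] /mapP[j]; rewrite mem_iota => /andP[_ lt_j] ->.
case: p lt_p => [[] j] lt_j; rewrite mem_cat; apply/orP; [left | right];
  by apply/mapP; exists j; rewrite // mem_iota.
Qed.

Definition kauffmanb (n : nat) (F : point -> point) : bool :=
  all (fun p => [&& (F p).2 < n, F (F p) == p & F p != p]) (points n) &&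
  all (fun p => all (fun q => ~~ crossing n F p q) (points n)) (points n).

Lemma kauffmanbP n F : reflect (kauffman_on n F) (kauffmanb n F).
Proof.
apply: (iffP andP) => [[/allP invF /allP ncF] | [invF ncF]]; split.
- move=> p lt_p; have := invF p; rewrite mem_points => /(_ lt_p).
  by case/and3P=> -> /eqP -> ->.
- move=> p q lt_p lt_q; have := ncF p; rewrite mem_points => /(_ lt_p) /allP.
  by apply; rewrite mem_points.
- by apply/allP => p; rewrite mem_points => /invF[-> -> ->]; rewrite eqxx.
- apply/allP => p; rewrite mem_points => lt_p; apply/allP => q.
  by rewrite mem_points; apply: ncF.
Qed.

Definition of_images (n : nat) (v : seq point) (p : point) : point :=
  nth p v (if p.1 then p.2 else n + p.2).

Lemma of_images_map n F p : p.2 < n -> of_images n (map F (points n)) p = F p.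
Proof.
move=> lt_p; rewrite /of_images (nth_map p) ?nth_points // size_points.
by case: p lt_p => [[] j] /=; lia.
Qed.

Fixpoint lists_over (T : Type) (D : seq T) (k : nat) : seq (seq T) :=
  if k is k'.+1 then [seq x :: v | x <- D, v <- lists_over D k'] else [:: [::]].

Lemma mem_lists_over (T : eqType) (D : seq T) v :
  {subset v <= D} -> v \in lists_over D (size v).
Proof.
elim: v => [|x v IH] sub_vD /=; first by rewrite inE.
apply: (allpairs_f (fun x v => x :: v)); first by rewrite sub_vD ?mem_head.
by apply: IH => y v_y; rewrite sub_vD // inE v_y orbT.
Qed.

Definition jmul (n : nat) (F G : point -> point) (p : point) : point :=
  odflt p (walk F G (2 * n).+1 p.1 p).

Definition small_diagrams (a : nat) : seq (seq point) :=
  [seq v <- lists_over (points a) (2 * a) | kauffmanb a (of_images a v)].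

Definition band_check (a : nat) (J : seq (point -> point)) : bool :=
  all (fun F =>
    all (fun p => walk F F (2 * a).+1 p.1 p == Some (F p)) (points a) &&
    all (fun G => kauffmanb a (jmul a F G) &&
      all (fun p => walk F G (2 * a).+1 p.1 p == Some (jmul a F G p)) (points a))
    J) J.

Lemma band_check_le3 a :
  a <= 3 -> band_check a [seq of_images a v | v <- small_diagrams a].
Proof. by case: a => [|[|[|[|a]]]] // _; vm_compute. Qed.

Lemma small_diagrams_complete a F : kauffman_on a F ->
  exists2 v, v \in small_diagrams a &
    forall p, p.2 < a -> (of_images a v p).2 < a /\ F p = of_images a v p.
Proof.
move=> kF; have [invF _] := kF.
have imF p : p.2 < a -> of_images a (map F (points a)) p = F p.
  exact: of_images_map.
exists (map F (points a)); last first.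
  by move=> p lt_p; rewrite imF //; have [] := invF p lt_p.
rewrite mem_filter; apply/andP; split.
  by apply/kauffmanbP; apply: eq_kauffman_on kF => p /imF.
rewrite -(size_points a) -(size_map F); apply: mem_lists_over => x /mapP[p].
by rewrite mem_points => /invF[lt_Fp _ _] ->; rewrite mem_points.
Qed.

Lemma small_mul a F G : a <= 3 -> kauffman_on a F -> kauffman_on a G ->
  exists2 H, kauffman_on a H &
    forall p, p.2 < a -> walk F G (2 * a).+1 p.1 p = Some (H p).
Proof.
move=> le_a3 /small_diagrams_complete[v Jv /local0 locF].
move=> /small_diagrams_complete[w Jw /local0 locG].
have := band_check_le3 le_a3; rewrite /band_check all_map => /allP/(_ v Jv).
case/andP=> _; rewrite all_map => /allP/(_ w Jw)/andP[/kauffmanbP kH /allP mulH].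
exists (jmul a (of_images a v) (of_images a w)) => // p lt_p.
have p_a : p \in points a by rewrite mem_points.
exact: walk_local0 locF locG lt_p (eqP (mulH p p_a)).
Qed.

Lemma small_mul_idem a F : a <= 3 -> kauffman_on a F ->
  forall p, p.2 < a -> walk F F (2 * a).+1 p.1 p = Some (F p).
Proof.
move=> le_a3 /small_diagrams_complete[v Jv FF'] p lt_p.
have := band_check_le3 le_a3; rewrite /band_check all_map => /allP/(_ v Jv).
case/andP=> /allP idem _; have p_a : p \in points a by rewrite mem_points.
have [_ ->] := FF' p lt_p.
exact: walk_local0 (local0 FF') (local0 FF') lt_p (eqP (idem p p_a)).
Qed.

Section Blocks.

Variable P : seq nat.

Definition pstart (i : nat) : nat := sumn (take i P).

Definition in_block (i j : nat) : bool := pstart i <= j < pstart i + nth 0 P i.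

Lemma pstartS i : pstart i.+1 = pstart i + nth 0 P i.
Proof.
case: (ltnP i (size P)) => [lt_i | le_i].
  by rewrite /pstart (take_nth 0 lt_i) sumn_rcons.
by rewrite /pstart !take_oversize ?nth_default ?addn0 // ltnW.
Qed.

Lemma pstart_mono : {homo pstart : i j / i <= j}.
Proof.
move=> i j /subnK <-; elim: (j - i) => [|d IH] //.
by rewrite addSn pstartS (leq_trans IH) ?leq_addr.
Qed.

Lemma pstart_size : pstart (size P) = sumn P.
Proof. by rewrite /pstart take_size. Qed.

Lemma block_le_sum i : i < size P -> pstart i + nth 0 P i <= sumn P.
Proof. by move=> lt_i; rewrite -pstartS -pstart_size pstart_mono. Qed.

Lemma pstart_cut i : 0 < i -> i <= size P -> pstart i \in cuts P.
Proof. by move=> pos_i le_i; apply/mapP; exists i; rewrite // mem_iota; lia. Qed.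

Lemma cut_off_block c i : c \in cuts P -> (c <= pstart i) || (pstart i.+1 <= c).
Proof.
case/mapP=> j _ ->; case: (leqP j i) => [le_ji | lt_ij].
  by rewrite (pstart_mono le_ji).
by rewrite (pstart_mono lt_ij) orbT.
Qed.

Lemma block_exists j : j < sumn P -> exists2 i, i < size P & in_block i j.
Proof.
rewrite -pstart_size; have : pstart 0 <= j by rewrite /pstart take0.
elim: (size P) => [|m IH] le_0j lt_jm; first by lia.
case: (ltnP j (pstart m)) => [lt_j | le_j].
  by have [i lt_i] := IH le_0j lt_j; exists i => //; lia.
by exists m; rewrite // /in_block le_j -pstartS.
Qed.

Lemma shift_block p : p.2 < sumn P ->
  exists i p', [/\ i < size P, p'.2 < nth 0 P i & p = shift (pstart i) p'].
Proof.
case/block_exists=> i lt_i /andP[le_p lt_p]; exists i, (p.1, p.2 - pstart i).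
by split => //=; [lia | rewrite /shift subnKC //; case: p {le_p lt_p}].
Qed.

Definition respects (F : point -> point) : Prop :=
  forall p, p.2 < sumn P -> all (fun c => (p.2 < c) == ((F p).2 < c)) (cuts P).

Lemma respects_block F i p :
  respects F -> i < size P -> in_block i p.2 -> in_block i (F p).2.
Proof.
move=> rF lt_i /andP[le_p lt_p].
have /allP sameF := rF p (leq_trans lt_p (block_le_sum lt_i)).
apply/andP; split; last first.
  by rewrite -pstartS -(eqP (sameF _ (pstart_cut (ltn0Sn i) lt_i))) pstartS.
case: (posnP i) => [-> | pos_i]; first by rewrite /pstart take0.
by rewrite leqNgt -(eqP (sameF _ (pstart_cut pos_i (ltnW lt_i)))) -leqNgt.
Qed.

Lemma respects_of_blocks F :
  (forall p, p.2 < sumn P -> exists2 i, in_block i p.2 & in_block i (F p).2) ->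
  respects F.
Proof.
move=> blk p /blk[i /andP[le_p lt_p] /andP[le_Fp lt_Fp]].
apply/allP => c /(cut_off_block i); rewrite pstartS => /orP[] le_c;
  by apply/eqP; apply/idP/idP; lia.
Qed.

Lemma crossing_other_block F i p q : respects F ->
  (forall x, x.2 < sumn P -> (F x).2 < sumn P) -> p.2 < sumn P -> q.2 < sumn P ->
  i < size P -> in_block i p.2 -> ~~ in_block i q.2 -> ~~ crossing (sumn P) F p q.
Proof.
move=> rF rangeF lt_p lt_q lt_i /andP[le_p lt_pa].
have sep c : c \in cuts P -> (p.2 < c) != (q.2 < c) -> ~~ crossing (sumn P) F p q.
  move=> cut_c; apply: crossing_separated; rewrite ?rangeF //.
    exact: eqP (allP (rF p lt_p) c cut_c).
  exact: eqP (allP (rF q lt_q) c cut_c).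
rewrite /in_block negb_and -ltnNge -leqNgt => /orP[lt_qs | le_q].
  case: (posnP i) => [i0 | pos_i]; first by rewrite i0 /pstart take0 in lt_qs.
  by apply: (sep _ (pstart_cut pos_i (ltnW lt_i))); rewrite ltnNge le_p lt_qs.
by apply: (sep _ (pstart_cut (ltn0Sn i) lt_i)); rewrite pstartS lt_pa ltnNge le_q.
Qed.

Definition block_of (i : nat) (F H : point -> point) : Prop :=
  kauffman_on (nth 0 P i) H /\ local (pstart i) (nth 0 P i) F H.

Lemma block_of_restrict F i : kauffman_on (sumn P) F -> respects F -> i < size P ->
  block_of i F (restrict (pstart i) F).
Proof.
move=> [invF ncF] rF lt_i; have le_n := block_le_sum lt_i.
have locR : local (pstart i) (nth 0 P i) F (restrict (pstart i) F).
  apply: local_restrict => p lt_p.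
  by apply: respects_block; rewrite // /in_block /=; lia.
split => //; split => [p lt_p | p q lt_p lt_q].
  have [lt_Rp eRp] := locR p lt_p; have [_ eRRp] := locR _ lt_Rp.
  have [_ FFp nFp] := invF (shift (pstart i) p) ltac:(rewrite /=; lia).
  rewrite eRp eRRp (inj_eq (@shift_inj _)) in FFp nFp.
  by split => //; apply: shift_inj FFp.
by rewrite (crossing_shift le_n locR) //; apply: ncF => /=; lia.
Qed.

Lemma glue_blocks F : (forall i, i < size P -> exists H, block_of i F H) ->
  kauffman_on (sumn P) F /\ respects F.
Proof.
move=> blocks.
have decomp p : p.2 < sumn P -> exists i p' H,
    [/\ i < size P, block_of i F H, p'.2 < nth 0 P i & p = shift (pstart i) p'].
  case/shift_block=> i [p' [lt_i lt_p' ->]]; have [H bH] := blocks i lt_i.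
  by exists i, p', H.
have invF p : p.2 < sumn P -> [/\ (F p).2 < sumn P, F (F p) = p & F p != p].
  case/decomp=> i [p' [H [lt_i [[invH _] locH] lt_p' ->]]].
  have [lt_Hp ->] := locH p' lt_p'; have [_ ->] := locH _ lt_Hp.
  have [_ -> nHp] := invH p' lt_p'; rewrite (inj_eq (@shift_inj _)) nHp.
  by split => //=; have := block_le_sum lt_i; lia.
have rF : respects F.
  apply: respects_of_blocks => _ /decomp[i [p [H [lt_i [_ locH] lt_p ->]]]].
  by have [lt_Hp ->] := locH p lt_p; exists i; rewrite /in_block /=; lia.
split=> //; split=> // p q lt_p lt_q.
have [i [p' [H [lt_i [[_ ncH] locH] lt_p' ep]]]] := decomp p lt_p.
have rangeF x : x.2 < sumn P -> (F x).2 < sumn P by case/invF.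
have [qi | qni] := boolP (in_block i q.2); last first.
  apply: (crossing_other_block rF rangeF lt_p lt_q lt_i) => //.
  by rewrite ep /in_block /=; lia.
have lt_q' : (q.1, q.2 - pstart i).2 < nth 0 P i by case/andP: qi => /= *; lia.
have -> : q = shift (pstart i) (q.1, q.2 - pstart i).
  by case: q {lt_q lt_q'} qi => c j /andP[le_j _]; rewrite /shift /= subnKC.
by rewrite ep -(crossing_shift (block_le_sum lt_i) locH lt_p' lt_q'); apply: ncH.
Qed.

End Blocks.

Definition point_of (n : nat) (x : kpt n) : point := (x.1, val x.2).

Definition pairing (n : nat) (f : kdiag n) (p : point) : point :=
  if insub p.2 is Some o then point_of (f (p.1, o)) else p.

Lemma pairing_point_of n (f : kdiag n) x : pairing f (point_of x) = point_of (f x).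
Proof. by rewrite /pairing /= valK; case: x. Qed.

Lemma point_of_inj n : injective (@point_of n).
Proof. by case=> [b o] [b' o'] [-> /val_inj ->]. Qed.

Lemma point_ofP n (p : point) : p.2 < n -> exists x : kpt n, p = point_of x.
Proof. by case: p => b j lt_j; exists (b, Ordinal lt_j). Qed.

Lemma is_kauffman_pairing n (f : kdiag n) : is_kauffman f <-> kauffman_on n (pairing f).
Proof.
split=> [/andP[/forallP invf /forallP ncf] | [invF ncF]].
  split=> [_ /point_ofP[x ->] | _ _ /point_ofP[x ->] /point_ofP[y ->]].
    rewrite !pairing_point_of (inj_eq (@point_of_inj n)).
    by have /andP[/eqP -> ->] := invf x; split=> //; apply: ltn_ord.
  by rewrite /crossing !pairing_point_of; apply: (forallP (ncf x)).
apply/andP; split; apply/forallP=> x.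
  have [_ ffx fx] := invF (point_of x) (ltn_ord _).
  rewrite !pairing_point_of in ffx fx.
  by rewrite (point_of_inj ffx) eqxx -(inj_eq (@point_of_inj n)).
apply/forallP=> y; have := ncF (point_of x) (point_of y) (ltn_ord _) (ltn_ord _).
by rewrite /crossing !pairing_point_of.
Qed.

Lemma has_partition_pairing P (f : kdiag (sumn P)) :
  has_partition P f <-> respects P (pairing f).
Proof.
split=> [/forallP part _ /point_ofP[x ->] | rf].
  by rewrite pairing_point_of; apply: part.
by apply/forallP=> x; have := rf (point_of x) (ltn_ord x.2); rewrite pairing_point_of.
Qed.

Lemma jsmp_pairing P (f : kdiag (sumn P)) :
  jsmp P f <-> kauffman_on (sumn P) (pairing f) /\ respects P (pairing f).
Proof.
rewrite -is_kauffman_pairing -has_partition_pairing.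
by split=> [/andP[] | []] => *; [split | apply/andP; split].
Qed.

Lemma jsmp_kid P n : jsmp P (kid n).
Proof.
apply/andP; split; last by apply/forallP=> x; rewrite ffunE; apply/allP=> c _ /=.
apply/andP; split; apply/forallP=> [[b i]]; rewrite !ffunE /= ?negbK.
  by case: b; rewrite eqxx.
apply/forallP=> [[b' j]]; rewrite /kpos !ffunE /=.
by have := ltn_ord i; have := ltn_ord j; case: b b' => [] [] /=; lia.
Qed.

Lemma jsmp_block P (x : kdiag (sumn P)) i : jsmp P x -> i < size P ->
  block_of P i (pairing x) (restrict (pstart P i) (pairing x)).
Proof. by move=> /jsmp_pairing[kx rx]; apply: block_of_restrict. Qed.

Lemma kwalk_walk n (A B : kdiag n) k b x q :
  walk (pairing A) (pairing B) k b (point_of x) = Some q ->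
  point_of (kwalk A B k b x) = q.
Proof.
elim: k b x => [|k IH] [] x //=; rewrite pairing_point_of.
  by case: (A x) => [[] o] /=; [case | apply: (IH _ (true, o))].
by case: (B x) => [[] o] /=; [apply: (IH _ (false, o)) | case].
Qed.

Lemma pairing_kmul n (A B : kdiag n) p q : p.2 < n ->
  walk (pairing A) (pairing B) (2 * n).+1 p.1 p = Some q -> pairing (kmul A B) p = q.
Proof. by case/point_ofP=> x -> w; rewrite pairing_point_of ffunE; apply: kwalk_walk. Qed.

Lemma kmul_local n s a (x y : kdiag n) Hx Hy p q : s + a <= n ->
  local s a (pairing x) Hx -> local s a (pairing y) Hy -> p.2 < a ->
  walk Hx Hy (2 * a).+1 p.1 p = Some q -> pairing (kmul x y) (shift s p) = shift s q.
Proof.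
move=> le_n locX locY lt_p w; apply: pairing_kmul; first by rewrite /=; lia.
apply: walk_shift locX locY lt_p _.
by rewrite (_ : (2 * n).+1 = (2 * a).+1 + 2 * (n - a)); [apply: walk_fuel | lia].
Qed.

Section SmallParts.

Variable P : seq nat.
Hypothesis parts_le3 : all (fun a => a <= 3) P.

Let part_le3 i : i < size P -> nth 0 P i <= 3.
Proof. by move=> /(mem_nth 0) /(allP parts_le3). Qed.

Lemma jsmp_kmul (x y : kdiag (sumn P)) : jsmp P x -> jsmp P y -> jsmp P (kmul x y).
Proof.
move=> jx jy; apply/jsmp_pairing; apply: glue_blocks => i lt_i.
have [[kX locX] [kY locY]] := (jsmp_block jx lt_i, jsmp_block jy lt_i).
have [H kH mulH] := small_mul (part_le3 lt_i) kX kY.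
exists H; split=> // p lt_p; split; first by case: kH => /(_ p lt_p)[].
exact: kmul_local (block_le_sum lt_i) locX locY lt_p (mulH p lt_p).
Qed.

Lemma jsmp_kmul_idem (x : kdiag (sumn P)) : jsmp P x -> kmul x x = x.
Proof.
move=> jx; apply/ffunP=> z; apply: (@point_of_inj (sumn P)).
rewrite -!pairing_point_of.
have [i [p [lt_i lt_p ->]]] := shift_block (ltn_ord z.2 : (point_of z).2 < sumn P).
have [kX locX] := jsmp_block jx lt_i.
have idem := small_mul_idem (part_le3 lt_i) kX lt_p.
rewrite (kmul_local (block_le_sum lt_i) locX locX lt_p idem).
by have [_ ->] := locX p lt_p.
Qed.

End SmallParts.

Theorem proposition3p2 (n : nat) (P : seq nat) :
  0 < n ->
  all (fun a => 0 < a <= 3) P ->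
  sumn P = n ->
  [/\ jsmp P (kid n),
      (forall x y : kdiag n, jsmp P x -> jsmp P y -> jsmp P (kmul x y))
    & (forall x : kdiag n, jsmp P x -> kmul x x = x)].
Proof.
move=> _ parts <-.
have parts_le3 : all (fun a => a <= 3) P by apply: sub_all parts => a /andP[].
split; [exact: jsmp_kid | exact: jsmp_kmul | exact: jsmp_kmul_idem].
Qed.
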